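(* Let $S$ be any scheduling rule. If there are p-SLD derivations $G\xrightarrow{S,E}F$ and $F\xrightarrow{S,H}Q$ via $S$, then there is a p-SLD derivation $G\xrightarrow{E}F\xrightarrow{H}R$ via $S$ (whose first part is the given derivation from $G$ to $F$) such that $R$ is a p-variant of $Q$.
   Context: A p-atom is a pair $a[p]$ of an atom $a$ and a rational priority $p$. A p-goal is a finite set of p-atoms with pairwise distinct priorities, regarded as a list ordered by increasing priority. Substitutions act on atoms and leave priorities unchanged. A clause is $h\leftarrow B$ with $h$ an atom and $B$ a p-goal. For p-goals with no common priority, $F+G=F\cup G$; $F|G$ denotes $F+G$ when all priorities of $F$ are smaller than those of $G$. A shifting is a strictly increasing bijection $\mathbb{Q}\to\mathbb{Q}$ acting on priorities. $F$ is a p-variant of $G$ if $F=G\lambda\underline{\sigma}$ for a renaming $\lambda$ and a shifting $\underline{\sigma}$. Priority derivation step: for a p-goal $a|F$ ($a$ of least priority), clause $c=(h\leftarrow B)$, renaming $\xi$ with $var(a|F)\cap var(c\xi)=\emptyset$, idempotent relevant mgu $\theta$ of $a$ and $h\xi$, shifting $\underline{\pi}$ with $F$, $B\xi\underline{\pi}$ sharing no priority: $a|F\xrightarrow{c\xi,\theta}(F+B\xi\underline{\pi})\theta$. A p-SLD derivation is a sequence of such steps with each renamed clause $c_j\xi_j$ variable-disjoint from the initial goal and all earlier renamed clauses; its template is the sequence of applied clauses. Lowering: for $c=(h\leftarrow B)$, a step $a\lambda\underline{\sigma}|(K\lambda\underline{\sigma}+X)\xrightarrow{c}(X+K\lambda\underline{\sigma}+B\xi''\underline{\theta}'')\alpha''$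 is a lowering by $X$ of $a|K\xrightarrow{c}(K+B\xi'\underline{\theta}')\alpha'$; a congruent lowering if some shifting $\underline{\rho}$ has $K\underline{\rho}=K\underline{\sigma}$ and $B\underline{\theta}'\underline{\rho}=B\underline{\theta}''$. Steps are (congruent) lowerings of each other if each is a (congruent) lowering of the other. A set $S$ of steps is deterministic if any two steps of $S$ that are lowerings of each other are congruent lowerings of each other; complete if (i) whenever some step $G\xrightarrow{c}\cdot$ exists, some step $G\xrightarrow{c}\cdot$ lies in $S$, and (ii) $S$ contains every step that is a congruent lowering of each other with a step of $S$. A scheduling rule is a complete deterministic set of steps; a derivation is via $S$ if all its steps lie in $S$, and $G\xrightarrow{S,M}R$ denotes such a derivation with template $M$. *)

From mathcomp Require Import all_boot all_order all_algebra.
Set Implicit Arguments. Unset Strict Implicit. Unset Printing Implicit Defensive.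
Import Order.TTheory GRing.Theory Num.Theory.

(* Variables are natural numbers; a function symbol is a name (nat) applied
   to a list of arguments (so a symbol is identified by name and arity). *)
Inductive term : Type :=
| Var : nat -> term
| Fn : nat -> seq term -> term.

Record atom : Type := Atom { apred : nat; aargs : seq term }.

Definition subst := nat -> term.

Fixpoint tsubst (s : subst) (t : term) : term :=
  match t with
  | Var x => s x
  | Fn f ts => Fn f (map (tsubst s) ts)
  end.

Definition asubst (s : subst) (a : atom) : atom :=
  Atom (apred a) (map (tsubst s) (aargs a)).

Fixpoint tvars (t : term) : seq nat :=
  match t with
  | Var x => [:: x]
  | Fn _ ts => flatten (map tvars ts)
  end.

Definition avars (a : atom) : seq nat := flatten (map tvars (aargs a)).

Definition is_renaming (r : subst) : Prop :=
  exists f : nat -> nat, bijective f /\ forall x, r x = Var (f x).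

Definition idempotent (th : subst) : Prop :=
  forall x, tsubst th (th x) = th x.

Definition unifier (th : subst) (a b : atom) : Prop := asubst th a = asubst th b.

Definition mgu (th : subst) (a b : atom) : Prop :=
  unifier th a b /\
  forall s, unifier s a b -> exists eta : subst, forall x, s x = tsubst eta (th x).

Definition relevant (th : subst) (a b : atom) : Prop :=
  forall x, th x <> Var x ->
    (x \in avars a ++ avars b) /\
    (forall y, y \in tvars (th x) -> y \in avars a ++ avars b).

(* a p-atom; p-goals are lists of p-atoms strictly sorted by priority
   (a finite set with pairwise distinct priorities, regarded as the list
   ordered by increasing priority). *)
Definition patom := (atom * rat)%type.
Definition pgoal := seq patom.

Definition prios (G : pgoal) : seq rat := map snd G.

Definition pgoal_wf (G : pgoal) : Prop :=
  sorted (fun p q : rat => (p < q)%R) (prios G).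

Definition no_common_prio (F G : pgoal) : Prop :=
  forall p, p \in prios F -> p \notin prios G.

Definition pg_plus (F G : pgoal) : pgoal :=
  sort (fun a b : patom => (a.2 <= b.2)%R) (F ++ G).

Definition pg_subst (s : subst) (G : pgoal) : pgoal :=
  map (fun pa : patom => (asubst s pa.1, pa.2)) G.

Definition is_shifting (pi : rat -> rat) : Prop :=
  (forall x y : rat, (x < y)%R -> (pi x < pi y)%R) /\ bijective pi.

Definition pg_shift (pi : rat -> rat) (G : pgoal) : pgoal :=
  map (fun pa : patom => (pa.1, pi pa.2)) G.

Definition pgvars (G : pgoal) : seq nat := flatten (map (fun pa : patom => avars pa.1) G).

Definition p_variant (F G : pgoal) : Prop :=
  exists (lam : subst) (sg : rat -> rat),
    is_renaming lam /\ is_shifting sg /\ F = pg_shift sg (pg_subst lam G).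

Record clause : Type := Clause { chead : atom; cbody : pgoal }.

Definition clause_wf (c : clause) : Prop := pgoal_wf (cbody c).

Definition csubst (s : subst) (c : clause) : clause :=
  Clause (asubst s (chead c)) (pg_subst s (cbody c)).

Definition cvars (c : clause) : seq nat := avars (chead c) ++ pgvars (cbody c).

(* A step  a|F --(c xi, theta)--> (F + B xi pi) theta,  recording the goal,
   the (unrenamed) clause c, the renaming xi, the mgu theta, the shifting pi
   and the resulting goal. *)
Record step : Type := Step {
  s_goal : pgoal;
  s_clause : clause;
  s_ren : subst;
  s_mgu : subst;
  s_shift : rat -> rat;
  s_res : pgoal }.

Definition is_step (st : step) : Prop :=
  match s_goal st with
  | [::] => False
  | pa :: F =>
      let c := s_clause st in
      let xi := s_ren st in
      let th := s_mgu st in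
      let pi := s_shift st in
      let Bxp := pg_shift pi (pg_subst xi (cbody c)) in
      pgoal_wf (pa :: F) /\ clause_wf c /\
      is_renaming xi /\
      (forall x, x \in pgvars (pa :: F) -> x \notin cvars (csubst xi c)) /\
      idempotent th /\ relevant th pa.1 (asubst xi (chead c)) /\
      mgu th pa.1 (asubst xi (chead c)) /\
      is_shifting pi /\ no_common_prio F Bxp /\
      s_res st = pg_subst th (pg_plus F Bxp)
  end.

Definition step_rvars (st : step) : seq nat := cvars (csubst (s_ren st) (s_clause st)).

(* s2 is a lowering by X of s1, witnessed by renaming lam and shifting sg:
   s1 : a|K --c--> ...,  s2 : (a lam sg) | (K lam sg + X) --c--> ... *)
Definition lowering_by (lam : subst) (sg : rat -> rat) (X : pgoal)
    (s2 s1 : step) : Prop :=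
  is_step s1 /\ is_step s2 /\ s_clause s2 = s_clause s1 /\
  is_renaming lam /\ is_shifting sg /\
  match s_goal s1 with
  | [::] => False
  | pa :: K =>
      let Kls := pg_shift sg (pg_subst lam K) in
      let al := (asubst lam pa.1, sg pa.2) in
      no_common_prio Kls X /\
      (forall p, p \in prios (Kls ++ X) -> (al.2 < p)%R) /\
      s_goal s2 = al :: pg_plus Kls X
  end.

Definition lowering (s2 s1 : step) : Prop :=
  exists lam sg X, lowering_by lam sg X s2 s1.

Definition congruent_lowering (s2 s1 : step) : Prop :=
  exists lam sg X, lowering_by lam sg X s2 s1 /\
    exists rho : rat -> rat, is_shifting rho /\
      pg_shift rho (behead (s_goal s1)) = pg_shift sg (behead (s_goal s1)) /\
      pg_shift rho (pg_shift (s_shift s1) (cbody (s_clause s1)))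
        = pg_shift (s_shift s2) (cbody (s_clause s2)).

Definition mutual_lowerings (s1 s2 : step) : Prop :=
  lowering s1 s2 /\ lowering s2 s1.

Definition mutual_congruent_lowerings (s1 s2 : step) : Prop :=
  congruent_lowering s1 s2 /\ congruent_lowering s2 s1.

Definition deterministic (S : step -> Prop) : Prop :=
  forall s1 s2, S s1 -> S s2 -> mutual_lowerings s1 s2 ->
    mutual_congruent_lowerings s1 s2.

Definition complete (S : step -> Prop) : Prop :=
  (forall (G : pgoal) (c : clause),
      (exists st, is_step st /\ s_goal st = G /\ s_clause st = c) ->
      exists st, S st /\ s_goal st = G /\ s_clause st = c) /\
  (forall s s', S s -> mutual_congruent_lowerings s' s -> S s').

Definition scheduling_rule (S : step -> Prop) : Prop :=
  (forall st, S st -> is_step st) /\ deterministic S /\ complete S.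

Fixpoint chain (G : pgoal) (ds : seq step) (R : pgoal) : Prop :=
  match ds with
  | [::] => G = R
  | st :: ds' => is_step st /\ s_goal st = G /\ chain (s_res st) ds' R
  end.

(* each renamed clause is variable-disjoint from the initial goal and all
   earlier renamed clauses (V accumulates these variables) *)
Fixpoint std_apart (V : seq nat) (ds : seq step) : Prop :=
  match ds with
  | [::] => True
  | st :: ds' =>
      (forall x, x \in step_rvars st -> x \notin V) /\
      std_apart (V ++ step_rvars st) ds'
  end.

Definition pSLD (G : pgoal) (ds : seq step) (R : pgoal) : Prop :=
  chain G ds R /\ std_apart (pgvars G) ds.

Definition template (ds : seq step) : seq clause := map s_clause ds.

Fixpoint all_steps_in (S : step -> Prop) (ds : seq step) : Prop :=
  match ds with [::] => True | st :: ds' => S st /\ all_steps_in S ds' end.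

Definition pSLD_via (S : step -> Prop) (G : pgoal) (ds : seq step) (R : pgoal) : Prop :=
  pSLD G ds R /\ all_steps_in S ds.

From mathcomp Require Import all_boot all_order all_algebra.
From mathcomp Require Import zify.
From Stdlib Require List.
Set Implicit Arguments. Unset Strict Implicit. Unset Printing Implicit Defensive.
Import Order.TTheory.

(* Rename the variables of the second derivation by an involution that fixes
   the variables of F and sends every other variable of its renamed clauses
   to a fresh one.  Each renamed step is a lowering of the original step by
   the empty goal with the identity shifting (and conversely), hence a
   congruent lowering, so it still lies in S by completeness (the only
   property of scheduling rules that is needed); the derivation
   still starts at F, its clauses are now standardized apart from the first
   derivation, and it ends in a renaming of Q. *)

Definition term_nested_ind (P : term -> Prop) (HV : forall x, P (Var x))
    (HF : forall f ts, List.Forall P ts -> P (Fn f ts)) : forall t, P t :=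
  fix IH t := match t with
  | Var x => HV x
  | Fn f ts => HF f ts ((fix IHs ts := match ts return List.Forall P ts with
        | nil => List.Forall_nil _
        | cons u us => List.Forall_cons _ (IH u) (IHs us) end) ts) end.

Lemma tsubst_comp s r t :
  tsubst s (tsubst r t) = tsubst (fun x => tsubst s (r x)) t.
Proof.
elim/term_nested_ind: t => [x|f ts IH] //=; congr Fn; rewrite -map_comp.
by elim: IH => //= u us -> _ ->.
Qed.

Lemma tsubst_id t : tsubst Var t = t.
Proof.
elim/term_nested_ind: t => [x|f ts IH] //=; congr Fn.
by elim: IH => //= u us -> _ ->.
Qed.

Lemma eq_in_tsubst s r t :
  {in tvars t, s =1 r} -> tsubst s t = tsubst r t.
Proof.
elim/term_nested_ind: t => [x|f ts IH] /= srE; first by apply: srE; rewrite inE.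
congr Fn; elim: IH srE => //= u us IHu _ IHus srE.
by rewrite IHu ?IHus // => x xu; apply: srE; rewrite mem_cat xu ?orbT.
Qed.

Lemma asubst_comp s r a :
  asubst s (asubst r a) = asubst (fun x => tsubst s (r x)) a.
Proof.
rewrite /asubst /= -map_comp; congr Atom; apply: eq_map => t; exact: tsubst_comp.
Qed.

Lemma eq_in_asubst s r a :
  {in avars a, s =1 r} -> asubst s a = asubst r a.
Proof.
case: a => p ts; rewrite /avars /= => srE; rewrite /asubst /=; congr Atom.
elim: ts srE => //= t ts IH srE; congr cons; last first.
  by apply: IH => x xts; apply: srE; rewrite mem_cat xts orbT.
by apply: eq_in_tsubst => x xt; apply: srE; rewrite mem_cat xt.
Qed.

Lemma pg_subst_comp s r G :
  pg_subst s (pg_subst r G) = pg_subst (fun x => tsubst s (r x)) G.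
Proof. by rewrite /pg_subst -map_comp; apply: eq_map => pa /=; rewrite asubst_comp. Qed.

Lemma eq_in_pg_subst s r G :
  {in pgvars G, s =1 r} -> pg_subst s G = pg_subst r G.
Proof.
elim: G => //= pa G IH srE; congr cons; last first.
  by apply: IH => x xG; apply: srE; rewrite /pgvars /= mem_cat xG orbT.
by rewrite (@eq_in_asubst s r) // => x xa; apply: srE; rewrite /pgvars /= mem_cat xa.
Qed.

Lemma pg_subst_id G : pg_subst Var G = G.
Proof.
rewrite /pg_subst -[RHS]map_id; apply: eq_map => -[[q ts] p] /=.
by rewrite /asubst /= (eq_map tsubst_id) map_id.
Qed.

Lemma prios_pg_subst s G : prios (pg_subst s G) = prios G.
Proof. by rewrite /prios /pg_subst -map_comp. Qed.

Lemma pg_subst_shift s pi G :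
  pg_subst s (pg_shift pi G) = pg_shift pi (pg_subst s G).
Proof. by rewrite /pg_subst /pg_shift -!map_comp. Qed.

Lemma pg_subst_plus s F G :
  pg_subst s (pg_plus F G) = pg_plus (pg_subst s F) (pg_subst s G).
Proof. by rewrite /pg_plus /pg_subst -map_cat sort_map. Qed.

Lemma pg_shift_id G : pg_shift id G = G.
Proof. by rewrite /pg_shift -[RHS]map_id; apply: eq_map => -[]. Qed.

Lemma csubst_comp s r c :
  csubst s (csubst r c) = csubst (fun x => tsubst s (r x)) c.
Proof. by rewrite /csubst /= asubst_comp pg_subst_comp. Qed.

Lemma is_shifting_id : is_shifting id.
Proof. by split=> //; exists id. Qed.

Definition ren (f : nat -> nat) : subst := fun x => Var (f x).

Lemma tvars_ren f t : tvars (tsubst (ren f) t) = map f (tvars t).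
Proof.
elim/term_nested_ind: t => [x|h ts IH] //=.
by elim: IH => //= u us -> _ ->; rewrite map_cat.
Qed.

Lemma avars_ren f a : avars (asubst (ren f) a) = map f (avars a).
Proof.
rewrite /avars /asubst /= map_flatten -!map_comp; congr flatten.
by apply: eq_map => t /=; rewrite tvars_ren.
Qed.

Lemma pgvars_ren f G : pgvars (pg_subst (ren f) G) = map f (pgvars G).
Proof.
rewrite /pgvars /pg_subst map_flatten -!map_comp; congr flatten.
by apply: eq_map => pa /=; rewrite avars_ren.
Qed.

Lemma cvars_ren f c : cvars (csubst (ren f) c) = map f (cvars c).
Proof. by rewrite /cvars /= avars_ren pgvars_ren map_cat. Qed.

Lemma pg_subst_ren_fix f G : {in pgvars G, f =1 id} -> pg_subst (ren f) G = G.
Proof.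
move=> fG; rewrite -[RHS]pg_subst_id.
by apply: eq_in_pg_subst => x /fG xE; rewrite /ren xE.
Qed.

Lemma pg_subst_renK f g : cancel f g -> cancel (pg_subst (ren f)) (pg_subst (ren g)).
Proof.
move=> fK G; rewrite pg_subst_comp -[RHS]pg_subst_id.
by apply: eq_in_pg_subst => x _; rewrite /ren /= fK.
Qed.

Lemma is_renaming_ren f g : cancel f g -> cancel g f -> is_renaming (ren f).
Proof. by move=> fK gK; exists f; split=> //; exists g. Qed.

Lemma congruent_lowering_renamed lam s1 s2 :
  is_renaming lam -> is_step s1 -> is_step s2 ->
  s_clause s2 = s_clause s1 -> s_shift s2 = s_shift s1 ->
  s_goal s2 = pg_subst lam (s_goal s1) -> congruent_lowering s2 s1.
Proof.
move=> lam_ren step1 step2 clE shE goalE.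
exists lam, id, [::]; split; last first.
  by exists id; rewrite shE clE !pg_shift_id; split; first exact: is_shifting_id.
do 5 (split=> //); first exact: is_shifting_id.
move: step1 goalE; rewrite /is_step; case: (s_goal s1) => [|[a p] K] //= [wf _] ->.
rewrite pg_shift_id /pg_plus cats0.
have lt_pK : all (fun q => (p < q)%R) (prios K).
  exact: order_path_min (@lt_trans _ rat) wf.
have sorted_K : sorted (fun x y : patom => (x.2 <= y.2)%R) (pg_subst lam K).
  move: (path_sorted wf); rewrite /pg_subst !sorted_map.
  by apply: sub_sorted => x y /= /ltW.
split=> //; split; first by move=> q; rewrite prios_pg_subst => /(allP lt_pK).
by rewrite sorted_sort // => x y z /le_trans; apply.
Qed.

Section RenameStep.

Variables f g : nat -> nat.
Hypotheses (fK : cancel f g) (gK : cancel g f).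

(* The mgu is conjugated by the permutation, so that it unifies the renamed atoms. *)
Definition ren_conj (th : subst) : subst := fun x => tsubst (ren f) (th (g x)).

Definition rename_step (st : step) : step :=
  Step (pg_subst (ren f) (s_goal st)) (s_clause st)
    (fun x => tsubst (ren f) (s_ren st x)) (ren_conj (s_mgu st))
    (s_shift st) (pg_subst (ren f) (s_res st)).

Lemma ren_conj_ren th x : tsubst (ren_conj th) (ren f x) = tsubst (ren f) (th x).
Proof. by rewrite /ren_conj /ren /= fK. Qed.

Lemma tsubst_ren_conj th t :
  tsubst (ren_conj th) (tsubst (ren f) t) = tsubst (ren f) (tsubst th t).
Proof. by rewrite !tsubst_comp; apply: eq_in_tsubst => x _; rewrite ren_conj_ren. Qed.

Lemma asubst_ren_conj th a :
  asubst (ren_conj th) (asubst (ren f) a) = asubst (ren f) (asubst th a).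
Proof.
by rewrite !asubst_comp; apply: eq_in_asubst => x _; rewrite ren_conj_ren.
Qed.

Lemma pg_subst_ren_conj th G :
  pg_subst (ren_conj th) (pg_subst (ren f) G) = pg_subst (ren f) (pg_subst th G).
Proof.
by rewrite !pg_subst_comp; apply: eq_in_pg_subst => x _; rewrite ren_conj_ren.
Qed.

Lemma mgu_ren_conj th a b :
  mgu th a b -> mgu (ren_conj th) (asubst (ren f) a) (asubst (ren f) b).
Proof.
move=> [th_ab th_mg]; split; first by rewrite /unifier !asubst_ren_conj th_ab.
move=> s; rewrite /unifier !asubst_comp => s_ab.
have [eta etaE] := th_mg (fun y => s (f y)) s_ab.
exists (fun z => eta (g z)) => x.
rewrite -[x]gK etaE /ren_conj fK tsubst_comp.
by apply: eq_in_tsubst => z _; rewrite /ren /= fK.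
Qed.

Lemma relevant_ren_conj th a b :
  relevant th a b -> relevant (ren_conj th) (asubst (ren f) a) (asubst (ren f) b).
Proof.
move=> th_rel x; rewrite /ren_conj !avars_ren -map_cat => thx.
have /th_rel [gx_ab th_gx] : th (g x) <> Var (g x).
  by move=> thE; apply: thx; rewrite thE /ren /= gK.
split; first by rewrite -[x]gK map_f.
by move=> y; rewrite tvars_ren => /mapP [z /th_gx z_ab ->]; rewrite map_f.
Qed.

Lemma is_step_rename st : is_step st -> is_step (rename_step st).
Proof.
case: st => [[|[a p] F] c xi th pi R] //; rewrite /is_step /=.
move=> [wf [cwf [xi_ren [disj [idem [rel [mg [sh [nc ->]]]]]]]]].
rewrite -asubst_comp -pg_subst_comp -pg_subst_shift.
have f_inj := can_inj fK.
have goalE : (asubst (ren f) a, p) :: pg_subst (ren f) F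
              = pg_subst (ren f) ((a, p) :: F) := erefl.
split; first by rewrite goalE /pgoal_wf prios_pg_subst.
split=> //.
split.
  case: xi_ren => h [hb hE]; exists (f \o h).
  by split=> [|x]; [exact: bij_comp (Bijective fK gK) hb | rewrite hE].
split.
  move=> x; rewrite -csubst_comp cvars_ren goalE pgvars_ren.
  by move=> /mapP [y /disj y_c ->]; rewrite mem_map.
split; first by move=> x; rewrite /ren_conj tsubst_ren_conj idem.
split; first exact: relevant_ren_conj.
split; first exact: mgu_ren_conj.
split=> //; split; first by rewrite /no_common_prio !prios_pg_subst.
by rewrite -pg_subst_plus pg_subst_ren_conj.
Qed.

Lemma rename_step_mutual_congruent st :
  is_step st -> mutual_congruent_lowerings (rename_step st) st.
Proof.
move=> st_step; have st'_step := is_step_rename st_step.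
split; first exact: congruent_lowering_renamed (is_renaming_ren fK gK) _ _ _ _ _.
apply: congruent_lowering_renamed (is_renaming_ren gK fK) _ _ _ _ _ => //=.
by rewrite pg_subst_renK.
Qed.

Lemma step_rvars_rename st : step_rvars (rename_step st) = map f (step_rvars st).
Proof. by rewrite /step_rvars /= -csubst_comp cvars_ren. Qed.

Lemma template_rename ds : template (map rename_step ds) = template ds.
Proof. by rewrite /template -map_comp. Qed.

Lemma chain_rename G ds R :
  chain G ds R -> chain (pg_subst (ren f) G) (map rename_step ds) (pg_subst (ren f) R).
Proof.
elim: ds G => [|st ds IH] G /= => [-> //|[st_step [<- st_chain]]].
by split; [exact: is_step_rename | split=> //; exact: IH].
Qed.

Lemma all_steps_in_rename S ds :
  scheduling_rule S -> all_steps_in S ds -> all_steps_in S (map rename_step ds).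
Proof.
move=> [S_step [_ [_ S_congr]]]; elim: ds => //= st ds IH [S_st S_ds].
split; last exact: IH.
by apply: (S_congr st) => //; apply: rename_step_mutual_congruent; apply: S_step.
Qed.

Lemma std_apart_rename V V' ds :
  std_apart V ds ->
  {in flatten (map step_rvars ds), forall x, x \notin V -> f x \notin V'} ->
  std_apart V' (map rename_step ds).
Proof.
have f_inj := can_inj fK.
elim: ds V V' => //= st ds IH V V' [st_apart ds_apart] fresh; split.
  rewrite step_rvars_rename => _ /mapP [x x_st ->].
  by apply: fresh (st_apart _ x_st); rewrite mem_cat x_st.
rewrite step_rvars_rename; apply: IH ds_apart _ => x x_ds.
rewrite mem_cat negb_or => /andP [xV x_st].
rewrite mem_cat negb_or mem_map // x_st andbT.
by apply: fresh xV; rewrite mem_cat x_ds orbT.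
Qed.

End RenameStep.

Lemma chain_cat G ds F ds' R :
  chain G ds F -> chain F ds' R -> chain G (ds ++ ds') R.
Proof.
elim: ds G => [|st ds IH] G /= => [-> //|[st_step [st_G ds_chain]] ds'_chain].
by split=> //; split=> //; apply: IH.
Qed.

Lemma std_apart_cat V ds ds' :
  std_apart V ds -> std_apart (V ++ flatten (map step_rvars ds)) ds' ->
  std_apart V (ds ++ ds').
Proof.
elim: ds V => [|st ds IH] V /=; first by rewrite cats0.
by move=> [st_apart ds_apart] ds'_apart; split=> //; apply: IH => //; rewrite -catA.
Qed.

Lemma all_steps_in_cat S ds ds' :
  all_steps_in S ds -> all_steps_in S ds' -> all_steps_in S (ds ++ ds').
Proof. by elim: ds => //= st ds IH [S_st S_ds] S_ds'; split=> //; apply: IH. Qed.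

Definition swap_shift (D : seq nat) (N : nat) (y : nat) : nat :=
  if y \in D then y + N else if (N <= y) && (y - N \in D) then y - N else y.

Lemma swap_shiftK D N : {in D, forall x, x < N} -> involutive (swap_shift D N).
Proof.
move=> DN y; have notD z : N <= z -> z \notin D by move=> Nz; apply/negP => /DN; lia.
rewrite {2}/swap_shift; case: ifP => yD.
  by rewrite /swap_shift (negbTE (notD _ (leq_addl _ _))) leq_addl addnK yD.
case: ifP => [/andP [Ny yND]|yN]; first by rewrite /swap_shift yND subnK.
by rewrite /swap_shift yD yN.
Qed.

Lemma exists_fresh_involution (A W B : seq nat) :
  exists k : nat -> nat, involutive k /\ {in A, k =1 id} /\
    {in W, forall x, x \notin A -> k x \notin B}.
Proof.
pose N := (\max_(x <- W ++ A ++ B) x).+1.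
have ltN x : x \in W ++ A ++ B -> x < N by move=> xs; rewrite ltnS leq_bigmax_seq.
pose D := [seq x <- W | x \notin A].
have DN : {in D, forall x, x < N}.
  by move=> x; rewrite mem_filter => /andP [_ xW]; apply: ltN; rewrite mem_cat xW.
exists (swap_shift D N); split; first exact: swap_shiftK.
split=> [x xA | x xW xA].
  have : x < N by apply: ltN; rewrite !mem_cat xA orbT.
  by rewrite /swap_shift mem_filter xA ltnNge => /negbTE ->.
rewrite /swap_shift mem_filter xA xW; apply/negP => xB.
have : x + N < N by apply: ltN; rewrite !mem_cat xB !orbT.
lia.
Qed.

Theorem mainTheorem9 (S : step -> Prop) (G F Q : pgoal)
    (dE dH : seq step) (E H : seq clause) :
  scheduling_rule S -> pgoal_wf G ->
  pSLD_via S G dE F -> template dE = E ->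
  pSLD_via S F dH Q -> template dH = H ->
  exists (dH' : seq step) (R : pgoal),
    pSLD_via S G (dE ++ dH') R /\ template dH' = H /\ p_variant R Q.
Proof.
move=> S_rule _ [[dE_chain dE_apart] dE_S] _ [[dH_chain dH_apart] dH_S] <-.
have [k [kK [k_F k_fresh]]] := exists_fresh_involution (pgvars F)
  (flatten (map step_rvars dH)) (pgvars G ++ flatten (map step_rvars dE)).
exists (map (rename_step k k) dH), (pg_subst (ren k) Q).
split; [split; [split|] | split].
- apply: chain_cat dE_chain _; rewrite -{1}(pg_subst_ren_fix k_F).
  exact: chain_rename.
- exact: std_apart_cat dE_apart (std_apart_rename kK dH_apart k_fresh).
- exact: all_steps_in_cat dE_S (all_steps_in_rename kK kK S_rule dH_S).
- exact: template_rename.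
- exists (ren k), id; rewrite pg_shift_id.
  by split; [exact: (is_renaming_ren kK kK) | split; first exact: is_shifting_id].
Qed.
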